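(* Let $(X,E,\ell)$ be a weighted tree, with its path metric. Then $X$ is of negative type, its weight $w\colon X\to\mathbb{R}$ (the unique solution of $\sum_{y\in X}e^{-d(x,y)}w(y)=1$ for all $x\in X$) is $$w(x)=\sum_{e\ni x}\frac{1}{1+e^{-\ell(e)}}-(\deg x-1),\qquad x\in X,$$ and its magnitude is $$|X|=\sum_{x\in X}w(x)=1+\sum_{e\in E}\tanh\Big(\frac{\ell(e)}{2}\Big).$$
   Context: A weighted tree is a triple $(X,E,\ell)$ where $(X,E)$ is a finite simple undirected graph that is a tree (connected, no cycles), and $\ell\colon E\to(0,\infty)$ assigns a length to each edge. It is a metric space on the vertex set $X$ with $d(x,y)$ the sum of the lengths of the edges along the unique simple path from $x$ to $y$. $\deg x$ is the number of neighbours of $x$; the sum $\sum_{e\ni x}$ ranges over edges containing $x$. A metric space is of negative type if $(X,\sqrt d)$ embeds isometrically into a Hilbert space. *)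

From HB Require Import structures.
From mathcomp Require Import all_boot all_order all_algebra.
From mathcomp Require Import reals sequences exp.
Set Implicit Arguments. Unset Strict Implicit. Unset Printing Implicit Defensive.
Import Order.TTheory GRing.Theory Num.Theory.
Local Open Scope ring_scope.

Definition simple_graph (T : finType) (adj : rel T) : Prop :=
  (forall x, ~~ adj x x) /\ (forall x y, adj x y = adj y x).

Definition simple_path (T : finType) (adj : rel T) (x : T) (p : seq T) (y : T) : bool :=
  [&& path adj x p, last x p == y & uniq (x :: p)].

(* connected graphs (hence trees) are nonempty by convention *)
Definition connected_graph (T : finType) (adj : rel T) : Prop :=
  (0 < #|T|)%N /\ forall x y, exists p, simple_path adj x p y.

Definition acyclic_graph (T : finType) (adj : rel T) : Prop :=
  ~ exists c : seq T, [&& (3 <= size c)%N, uniq c & cycle adj c].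

Definition is_tree (T : finType) (adj : rel T) : Prop :=
  simple_graph adj /\ connected_graph adj /\ acyclic_graph adj.

Definition edges (T : finType) (adj : rel T) : {set {set T}} :=
  [set [set x; y] | x in T, y in T & adj x y].

Definition deg (T : finType) (adj : rel T) (x : T) : nat := #|[set y | adj x y]|.

Fixpoint walk_length (R : numDomainType) (T : finType) (ell : {set T} -> R)
    (x : T) (p : seq T) : R :=
  if p is y :: q then ell [set x; y] + walk_length ell y q else 0.

Definition eucl_norm (R : rcfType) (n : nat) (v : 'rV[R]_n) : R :=
  Num.sqrt (\sum_(i < n) v ord0 i ^+ 2).

(* negative type: (T, sqrt d) embeds isometrically into a Hilbert space; since T is
   finite, the image spans a finite-dimensional subspace, i.e. some R^n. *)
Definition negative_type (R : rcfType) (T : finType) (d : T -> T -> R) : Prop :=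
  exists n (f : T -> 'rV[R]_n), forall x y, Num.sqrt (d x y) = eucl_norm (f x - f y).

Definition is_weighting (R : realType) (T : finType) (d : T -> T -> R) (w : T -> R) : Prop :=
  forall x, \sum_(y : T) expR (- d x y) * w y = 1.

Definition tanh (R : realType) (x : R) : R :=
  (expR x - expR (- x)) / (expR x + expR (- x)).

From mathcomp Require Import all_boot all_order all_algebra.
From mathcomp Require Import reals sequences exp.
From mathcomp Require Import ring lra.
Import Order.TTheory GRing.Theory Num.Theory.
Local Open Scope ring_scope.
Set Implicit Arguments. Unset Strict Implicit. Unset Printing Implicit Defensive.

(* Root the tree at [r] and name each edge by its endpoint [v] farther from [r].
   Sending [x] to the vector with entry [sqrt ell(v, parent v)] at every edge [v] of
   the path from [x] to [r] (and [0] elsewhere) is an embedding of [sqrt d]: the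
   path from [x] to [y] consists exactly of the edges lying on one of the two root
   paths.
   For the weighting put [q = exp (- ell)] on each edge. Walking from [x] one step
   towards [z] multiplies [exp (- d _ z)] by [1/q], any other step by [q]; hence
   the matrix [exp (- d)] has the inverse with diagonal [1 + \sum q^2 / (1 - q^2)]
   over the neighbours and entries [- q / (1 - q^2)] on edges. The weighting is
   made of its row sums [1 + \sum (1 / (1 + q) - 1)]; summing over all vertices
   counts every edge twice, and [2 / (1 + exp (- l)) - 1 = tanh (l / 2)]. *)

Lemma sum_delta (R : pzSemiRingType) (T : finType) (F : T -> R) x :
  \sum_y (x == y)%:R * F y = F x.
Proof.
rewrite (bigD1 x) //= eqxx mul1r big1 ?addr0 // => y hy.
by rewrite eq_sym (negbTE hy) mul0r.
Qed.

Lemma sum_inverse_comm (R : comPzRingType) (T : finType) (A B : T -> T -> R) :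
  (forall x z, \sum_y A x y * B y z = (x == z)%:R) ->
  forall x z, \sum_y B x y * A y z = (x == z)%:R.
Proof.
move=> AB x z.
pose mx (F : T -> T -> R) := \matrix_(i < #|T|, j < #|T|) F (enum_val i) (enum_val j).
have mxAB : mx A *m mx B = 1%:M.
  apply/matrixP => i j; rewrite !mxE.
  under eq_bigr do rewrite !mxE.
  rewrite -(big_enum_val (A := T) (fun y => A (enum_val i) y * B y (enum_val j))).
  by rewrite AB (inj_eq enum_val_inj).
have e : (mx B *m mx A) (enum_rank x) (enum_rank z) = (1%:M : 'M_#|T|) (enum_rank x) (enum_rank z).
  by rewrite (mulmx1C mxAB).
rewrite !mxE (inj_eq enum_rank_inj) in e; rewrite -e.
rewrite (big_enum_val (A := T) (fun y => B x y * A y z)).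
by apply: eq_bigr => i _; rewrite !mxE !enum_rankK.
Qed.

Lemma weighting_inverseP (R : comPzRingType) (T : finType) (Z M : T -> T -> R) (w : T -> R) :
  (forall x z, \sum_y M x y * Z y z = (x == z)%:R) ->
  (forall x, \sum_y Z x y * w y = 1) <-> (forall x, w x = \sum_z M x z).
Proof.
move=> MZ; have ZM := sum_inverse_comm MZ; split=> hw x.
  rewrite -(sum_delta w x).
  under eq_bigr do rewrite -MZ mulr_suml.
  rewrite exchange_big /=; apply: eq_bigr => y _.
  by rewrite -[RHS]mulr1 -(hw y) mulr_sumr; apply: eq_bigr => z _; rewrite mulrA.
under eq_bigr do rewrite hw mulr_sumr; rewrite exchange_big /=.
rewrite -[RHS](sum_delta (fun=> 1) x); apply: eq_bigr => z _.
by rewrite mulr1 ZM.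
Qed.

Lemma tanh_half (R : realType) (a : R) : tanh (a / 2) = 2 / (1 + expR (- a)) - 1.
Proof.
rewrite /tanh.
have -> : - a = - (a / 2) + - (a / 2) by field.
rewrite expRD !expRN.
have hu := expR_gt0 (a / 2); set u := expR (a / 2).
have hv : 0 < u^-1 by rewrite invr_gt0.
by field; rewrite !lt0r_neq0 // ?addr_gt0 ?mulr_gt0.
Qed.

Lemma walk_length_rcons (R : numDomainType) (T : finType) (ell : {set T} -> R) x p z :
  walk_length ell x (rcons p z) = walk_length ell x p + ell [set last x p; z].
Proof. by elim: p x => [|a p IH] x /=; rewrite ?addr0 ?add0r // IH addrA. Qed.

Lemma last_rev_belast (T : Type) (x z : T) p :
  last z (rev (belast x p)) = if p is [::] then z else x.
Proof. by case: p => [|a p] //=; rewrite rev_cons last_rcons. Qed.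

Lemma walk_length_rev (R : numDomainType) (T : finType) (ell : {set T} -> R) x p :
  walk_length ell x p = walk_length ell (last x p) (rev (belast x p)).
Proof.
elim: p x => [|a p IH] x //=.
rewrite rev_cons walk_length_rcons last_rev_belast IH.
by case: p {IH} => [|b p] /=; rewrite setUC ?addr0 ?add0r // addrC.
Qed.

Section Tree.
Variables (R : realType) (T : finType) (adj : rel T)
    (ell : {set T} -> R) (d : T -> T -> R).
Hypothesis tree : is_tree adj.
Hypothesis ell_gt0 : forall x y, adj x y -> 0 < ell [set x; y].
Hypothesis d_path : forall x y p, simple_path adj x p y -> d x y = walk_length ell x p.

Lemma adj_irr x : ~~ adj x x. Proof. by case: tree => [[]]. Qed.
Lemma adjC x y : adj x y = adj y x. Proof. by case: tree => [[]]. Qed.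
Lemma ellC x y : ell [set x; y] = ell [set y; x]. Proof. by rewrite setUC. Qed.

Lemma tree_connected x y : exists p, simple_path adj x p y.
Proof. by case: tree => _ [[_ ]]. Qed.

Lemma adj_neq x y : adj x y -> x != y.
Proof. by apply: contraTneq => ->; apply: adj_irr. Qed.

Lemma d_refl x : d x x = 0.
Proof. by rewrite (d_path (p := [::])) // /simple_path /= eqxx. Qed.

Lemma d_adj x y : adj x y -> d x y = ell [set x; y].
Proof.
move=> hxy; rewrite (d_path (p := [:: y])) /= ?addr0 //.
by rewrite /simple_path /= hxy eqxx inE adj_neq.
Qed.

Lemma d_ge0 x y : 0 <= d x y.
Proof.
have [p hp] := tree_connected x y; rewrite (d_path hp).
case/and3P: hp => + _ _; elim: p x {y} => [|y p IH] x //= /andP[hxy hp].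
by rewrite addr_ge0 ?IH // ltW // ell_gt0.
Qed.

Lemma d_sym x y : d y x = d x y.
Proof.
have [p hp] := tree_connected x y; have := hp; case/and3P => hpath /eqP hlast huniq.
rewrite (d_path hp) walk_length_rev hlast; apply: d_path; apply/and3P; split.
- by rewrite -hlast rev_path; apply: sub_path hpath => a b; rewrite adjC.
- by rewrite last_rev_belast; case: p {hp hpath huniq} hlast => [/= ->|].
- by rewrite -hlast -rev_rcons -lastI rev_uniq.
Qed.

Lemma simple_path_first_step x z : x != z -> exists y0 p, simple_path adj x (y0 :: p) z.
Proof.
move=> hxz; have [[|y0 p] hp] := tree_connected x z; last by exists y0, p.
by case/and3P: hp => _ /eqP /= e; rewrite e eqxx in hxz.
Qed.

(* If [y] already occurred on the path, the part from [x] to [y] together with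
   the edge [yx] would be a cycle. *)
Lemma simple_path_backstep x y y0 p z : simple_path adj x (y0 :: p) z ->
  adj x y -> y != y0 -> simple_path adj y (x :: y0 :: p) z.
Proof.
case/and3P=> /= /andP[hxy0 hp] hl /and3P[hx hy0p hu] hxy hyy0.
rewrite /simple_path /= adjC hxy hxy0 hp hl hx hy0p hu !andbT inE negb_or.
rewrite eq_sym (adj_neq hxy) /= inE (negbTE hyy0) /=.
apply/negP => hyq; case: tree => _ [_]; apply.
move: hu hy0p hp hx; case/splitPr: hyq => s1 s2 hu hy0p hp hx.
exists [:: x, y0 & rcons s1 y].
rewrite /= size_rcons /= hxy0 rcons_path last_rcons adjC hxy andbT.
move: hp; rewrite cat_path /= => /and3P[hp1 ha _].
rewrite -cats1 cat_path hp1 /= ha andbT cats1 rcons_uniq.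
move: hx hy0p hu; rewrite !inE !mem_cat !inE !negb_or cat_uniq /=.
rewrite !mem_rcons !inE !negb_or andbT.
by move=> /and4P[-> -> -> _] /and3P[-> -> _] /and4P[-> /andP[-> _] _ _].
Qed.

Lemma d_first_step x y0 p z : simple_path adj x (y0 :: p) z ->
  [/\ adj x y0, d y0 z = d x z - ell [set x; y0] &
      forall y, adj x y -> y != y0 -> d y z = d x z + ell [set x; y]].
Proof.
move=> hs; have := hs; case/and3P => /= /andP[hxy0 hp] hl /and3P[_ hy0p hu].
have hs' : simple_path adj y0 p z by rewrite /simple_path hp hl /= hy0p hu.
split=> // [|y hxy hyy0]; first by rewrite (d_path hs) (d_path hs') /= addrC addKr.
by rewrite (d_path (simple_path_backstep hs hxy hyy0)) (d_path hs) /= ellC addrC.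
Qed.

Lemma d_adj_step u v z : adj u v ->
  d v z = d u z + ell [set u; v] \/ d v z = d u z - ell [set u; v].
Proof.
move=> huv; have [<-|huz] := eqVneq u z.
  by left; rewrite d_refl add0r d_adj 1?adjC // ellC.
have [y0 [p /d_first_step[_ h2 h3]]] := simple_path_first_step huz.
by have [->|hv] := eqVneq v y0; [right | left; apply: h3].
Qed.

Lemma d_triangle x y z : d x z <= d x y + d y z.
Proof.
have [p hp] := tree_connected x y; rewrite (d_path hp).
case/and3P: hp => + /eqP <- _; elim: p x => [|a p IH] x /=; first by rewrite add0r.
case/andP=> hxa hp; rewrite -addrA.
have h : d x z <= ell [set x; a] + d a z.
  by have := ell_gt0 hxa; case: (d_adj_step z hxa) => ->; lra.
by apply: (le_trans h); rewrite lerD2l IH.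
Qed.

Definition q x y := expR (- ell [set x; y]).
Definition simil y z := expR (- d y z).

Definition diag_coef x := 1 + \sum_(y | adj x y) q x y ^+ 2 / (1 - q x y ^+ 2).
Definition edge_coef x y := q x y / (1 - q x y ^+ 2).
Definition simil_inv x z :=
  (if x == z then diag_coef x else 0) - (if adj x z then edge_coef x z else 0).

Lemma q_gt0 x y : 0 < q x y. Proof. exact: expR_gt0. Qed.

Lemma q_lt1 x y : adj x y -> q x y < 1.
Proof.
move=> h; have hl := ell_gt0 h.
rewrite /q expRN invf_lt1 ?expR_gt0 //; have := expR_gt1Dx (lt0r_neq0 hl); lra.
Qed.

Lemma one_sub_q_sq_neq0 x y : adj x y -> 1 - q x y ^+ 2 != 0.
Proof.
move=> h; have := q_gt0 x y; have := q_lt1 h.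
by move=> h1 h0; rewrite lt0r_neq0 // subr_gt0 expr2; nra.
Qed.

Lemma simil_inv_row x z :
  \sum_y simil_inv x y * simil y z =
  diag_coef x * simil x z - \sum_(y | adj x y) edge_coef x y * simil y z.
Proof.
rewrite /simil_inv; under eq_bigr do rewrite mulrBl; rewrite sumrB.
rewrite (bigD1 x) //= eqxx big1 ?addr0 => [|y hy]; last first.
  by rewrite eq_sym (negbTE hy) mul0r.
by congr (_ - _); rewrite [RHS]big_mkcond; apply: eq_bigr => y _; case: ifP; rewrite ?mul0r.
Qed.

Lemma simil_inv_diag x : \sum_y simil_inv x y * simil y x = 1.
Proof.
rewrite simil_inv_row /simil d_refl oppr0 expR0 mulr1 /diag_coef -[RHS]addr0 -addrA.
congr (_ + _); apply/eqP; rewrite subr_eq0 eq_sym; apply/eqP; apply: eq_bigr => y hy.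
by rewrite d_adj 1?adjC // ellC -/(q x y) /edge_coef mulrAC expr2.
Qed.

Lemma simil_inv_offdiag x z : x != z -> \sum_y simil_inv x y * simil y z = 0.
Proof.
move=> hxz; have [y0 [p /d_first_step[hxy0 h2 h3]]] := simple_path_first_step hxz.
rewrite simil_inv_row /diag_coef (bigD1 y0) //= (bigD1 y0 hxy0) /=.
have -> : \sum_(y | adj x y && (y != y0)) edge_coef x y * simil y z =
          (\sum_(y | adj x y && (y != y0)) q x y ^+ 2 / (1 - q x y ^+ 2)) * simil x z.
  rewrite mulr_suml; apply: eq_bigr => y /andP[hy hne].
  rewrite /simil (h3 _ hy hne) opprD expRD -/(q x y) /edge_coef expr2.
  by field; rewrite one_sub_q_sq_neq0.
have -> : simil y0 z = simil x z / q x y0.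
  by rewrite /simil h2 opprB /q [expR (- ell _)]expRN invrK -expRD addrC.
rewrite /edge_coef; field.
by rewrite one_sub_q_sq_neq0 // lt0r_neq0 ?q_gt0.
Qed.

Lemma simil_invP x z : \sum_y simil_inv x y * simil y z = (x == z)%:R.
Proof.
by have [<-|hxz] := eqVneq x z; rewrite ?simil_inv_diag ?simil_inv_offdiag.
Qed.

Definition weight x := \sum_z simil_inv x z.

Lemma deg_sum x : (deg adj x)%:R = \sum_(y | adj x y) (1 : R).
Proof. by rewrite /deg -sum1_card natr_sum; apply: eq_bigl => y; rewrite inE. Qed.

Lemma weightE x : weight x = 1 + \sum_(y | adj x y) ((1 + q x y)^-1 - 1).
Proof.
rewrite /weight /simil_inv sumrB (bigD1 x) //= eqxx big1 ?addr0 => [|y hy]; last first.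
  by rewrite eq_sym (negbTE hy).
rewrite -big_mkcond /diag_coef -addrA; congr (_ + _); rewrite -sumrB.
apply: eq_bigr => y hy; have := q_gt0 x y => h0.
rewrite /edge_coef; field.
by rewrite one_sub_q_sq_neq0 // lt0r_neq0 // addr_gt0.
Qed.

Lemma weight_degree x : weight x =
  \sum_(y | adj x y) (1 + expR (- ell [set x; y]))^-1 - ((deg adj x)%:R - 1).
Proof. by rewrite weightE deg_sum sumrB /q; lra. Qed.

Lemma weightingP w : is_weighting d w <-> forall x, w x = weight x.
Proof.
rewrite /is_weighting -(weighting_inverseP w simil_invP).
by split=> hw x; rewrite -(hw x); apply: eq_bigr => y _; rewrite mulrC.
Qed.

Section Root.
Variable r : T.

Definition depth x := d x r.
Definition parent x :=
  if x == r then r else odflt r [pick y | adj x y && (depth y < depth x)].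

Lemma parent_spec x : x != r ->
  [/\ adj x (parent x), depth (parent x) = depth x - ell [set x; parent x] &
      forall y, adj x y -> y != parent x -> depth y = depth x + ell [set x; y]].
Proof.
move=> hx; have [y0 [p hs]] := simple_path_first_step hx.
have [hxy0 h2 h3] := d_first_step hs; suff -> : parent x = y0 by [].
rewrite /parent (negbTE hx); case: pickP => [y /andP[hy hlt] | none] /=.
  apply/eqP; apply: contraTT hlt => hne; rewrite /depth (h3 _ hy hne) -leNgt.
  by rewrite lerDl ltW // ell_gt0.
exfalso; have := ell_gt0 hxy0; move: (none y0); rewrite hxy0 /= /depth h2 => /negbT.
by rewrite -leNgt; lra.
Qed.

Lemma parent_root : parent r = r. Proof. by rewrite /parent eqxx. Qed.

Lemma depth_root : depth r = 0. Proof. exact: d_refl. Qed.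

Lemma depth_parent_lt x : x != r -> depth (parent x) < depth x.
Proof.
by move=> hx; have [h1 -> _] := parent_spec hx; have := ell_gt0 h1; lra.
Qed.

Lemma depth_parent_le x : depth (parent x) <= depth x.
Proof.
by have [->|hx] := eqVneq x r; rewrite ?parent_root // ltW // depth_parent_lt.
Qed.

Lemma parent_ind (P : T -> Prop) :
  P r -> (forall x, x != r -> P (parent x) -> P x) -> forall x, P x.
Proof.
move=> Pr Pparent x.
have [n] := ubnP #|[set y | depth y < depth x]|; elim: n x => // n IH x hn.
have [->|hx] := eqVneq x r; first done.
apply: (Pparent x hx); apply: IH; rewrite -ltnS; apply: leq_trans hn.
rewrite ltnS; apply: proper_card; apply/properP; split.
  by apply/subsetP => y; rewrite !inE => h; apply: lt_le_trans h (depth_parent_le x).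
by exists (parent x); rewrite !inE ?ltxx // depth_parent_lt.
Qed.

Lemma adj_child x y : adj x y -> y != parent x -> y != r /\ parent y = x.
Proof.
move=> hxy hyp.
have hdepth : depth y = depth x + ell [set x; y].
  have [e|hx] := eqVneq x r; last by have [_ _ ->] := parent_spec hx.
  by rewrite e /depth d_refl add0r d_adj -?e 1?adjC // ellC.
have hyr : y != r.
  apply: contraTneq (ell_gt0 hxy) => e; have := d_ge0 x r.
  by move: hdepth; rewrite e depth_root /depth; lra.
split=> //; have [_ _ h3] := parent_spec hyr.
apply/eqP; apply: contraT => hne.
have := h3 x; rewrite adjC hxy eq_sym hne => /(_ isT isT).
by have := ell_gt0 hxy; rewrite hdepth ellC; lra.
Qed.

Lemma fconnect_parent y z : fconnect parent y z = (z == y) || fconnect parent (parent y) z.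
Proof.
apply/idP/idP.
  move/iter_findex => <-; case: findex => [|k]; first by rewrite /= eqxx.
  by rewrite iterSr fconnect_iter orbT.
case/orP => [/eqP -> | h]; first exact: connect0.
exact: connect_trans (fconnect1 _ _) h.
Qed.

Lemma fconnect_root z : fconnect parent r z -> z = r.
Proof. by move/iter_findex => <-; elim: findex => //= k ->; rewrite parent_root. Qed.

Lemma d_ancestor y z : fconnect parent y z -> d y z = depth y - depth z.
Proof.
move: z; elim/parent_ind: y => [|y hy IH] z.
  by move/fconnect_root ->; rewrite d_refl subrr.
rewrite fconnect_parent => /orP [/eqP -> | /IH e]; first by rewrite d_refl subrr.
have [hadj hdepth _] := parent_spec hy; have := ell_gt0 hadj; have := d_triangle y z r.
by rewrite /depth in e hdepth *; case: (d_adj_step z hadj); lra.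
Qed.

Lemma descending_path_fconnect vs a b : path adj a (b :: vs) -> uniq (a :: b :: vs) ->
  b != parent a -> fconnect parent (last b vs) a.
Proof.
elim: vs a b => [|c vs IH] a b /=.
  move=> /andP[hab _] _ hb; have [_ <-] := adj_child hab hb; exact: fconnect1.
move=> /and3P[hab hbc hp] /andP[ha /andP[hb hu]] hbn; have [_ e] := adj_child hab hbn.
apply: connect_trans (IH b c _ _ _) _; rewrite /= ?hbc ?hb //.
- by rewrite e; apply: contraNneq ha => ->; rewrite !inE eqxx orbT.
- by rewrite -e; apply: fconnect1.
Qed.

Definition branch y := [set z | fconnect parent y z & z != r].

Lemma branch_root : branch r = set0.
Proof.
apply/setP => z; rewrite !inE; apply/negbTE/negP => /andP[/fconnect_root ->].
by rewrite eqxx.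
Qed.

Lemma branch_parent y : y != r -> branch y = y |: branch (parent y).
Proof.
move=> hy; apply/setP => z; rewrite !inE fconnect_parent.
by have [->|hz] := eqVneq z y; rewrite ?hy.
Qed.

Lemma notin_branch_parent y : y != r -> y \notin branch (parent y).
Proof.
move=> hy; rewrite inE; apply/negP => /andP[/d_ancestor h _].
by have := d_ge0 (parent y) y; have := depth_parent_lt hy; rewrite h; lra.
Qed.

Lemma d_parent x y : x != r -> d (parent x) y =
  if x \in branch y then d x y + ell [set x; parent x] else d x y - ell [set x; parent x].
Proof.
move=> hx; have [hadj hdepth _] := parent_spec hx.
case: ifP => hxy.
  move: hxy; rewrite inE => /andP[h _].
  have h1 := d_ancestor h; have h2 := d_ancestor (connect_trans h (fconnect1 _ _)).
  by rewrite d_sym in h1; rewrite d_sym in h2; rewrite h1 h2 hdepth; lra.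
have [e|hne] := eqVneq x y; first by move: hxy; rewrite e inE connect0 -e hx.
have [y0 [p hs]] := simple_path_first_step hne; have [_ h2 _] := d_first_step hs.
have [<-|hy0] := eqVneq y0 (parent x); first by [].
case/and3P: hs => hpath /eqP /= hlast huniq.
have := descending_path_fconnect hpath huniq hy0.
by rewrite hlast; move: hxy; rewrite inE hx andbT => ->.
Qed.

Definition parent_len v := ell [set v; parent v].

Definition coord x v := if v \in branch x then Num.sqrt (parent_len v) else 0.

Lemma parent_len_gt0 v : v != r -> 0 < parent_len v.
Proof. by move=> hv; have [h _ _] := parent_spec hv; apply: ell_gt0. Qed.

Lemma depth_branch y : depth y = \sum_(v in branch y) parent_len v.
Proof.
elim/parent_ind: y => [|y hy IH]; first by rewrite branch_root big_set0 depth_root.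
rewrite branch_parent // big_setU1 ?notin_branch_parent //= -IH.
by have [_ -> _] := parent_spec hy; rewrite /parent_len; lra.
Qed.

Lemma sum_coord_sq y : \sum_v coord y v ^+ 2 = depth y.
Proof.
rewrite depth_branch [RHS]big_mkcond; apply: eq_bigr => v _; rewrite /coord.
case: ifP => [|_]; last by rewrite expr0n.
by rewrite inE => /andP[_ hv]; rewrite sqr_sqrtr // ltW // parent_len_gt0.
Qed.

Lemma d_coord x y : d x y = \sum_v (coord x v - coord y v) ^+ 2.
Proof.
move: y; elim/parent_ind: x => [|x hx IH] y.
  under eq_bigr do rewrite {1}/coord branch_root in_set0 sub0r sqrrN.
  by rewrite sum_coord_sq d_sym.
rewrite (bigD1 x) //=.
have -> : \sum_(v | v != x) (coord x v - coord y v) ^+ 2 =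
          d (parent x) y - coord y x ^+ 2.
  have gpx : coord (parent x) x = 0 by rewrite /coord (negbTE (notin_branch_parent hx)).
  rewrite IH [X in _ = X - _](bigD1 x) //= gpx sub0r sqrrN.
  rewrite addrAC subrr add0r; apply: eq_bigr => v hv.
  by rewrite {1 2}/coord branch_parent // in_setU1 (negbTE hv).
have gx : coord x x = Num.sqrt (parent_len x) by rewrite /coord branch_parent // setU11.
have hc : Num.sqrt (parent_len x) ^+ 2 = parent_len x.
  exact: sqr_sqrtr (ltW (parent_len_gt0 hx)).
rewrite d_parent // gx /coord /parent_len in hc *.
by case: ifP => _; rewrite ?subrr ?subr0 ?expr0n /= hc; ring.
Qed.

Lemma tree_negative_type : negative_type d.
Proof.
exists #|T|, (fun x => \row_(i < #|T|) coord x (enum_val i)) => x y.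
rewrite /eucl_norm d_coord (big_enum_val (A := T) (fun v => (coord x v - coord y v) ^+ 2)).
by congr Num.sqrt; apply: eq_bigr => i _; rewrite !mxE.
Qed.

Definition parent_edge x y := (x != r) && (y == parent x).

Lemma adj_parent_edge x y : adj x y = parent_edge x y || parent_edge y x.
Proof.
rewrite /parent_edge; apply/idP/orP.
  move=> hxy; have [e|hne] := eqVneq y (parent x).
    have [hx|hx] := eqVneq x r; last by left.
    by move: hxy; rewrite e hx parent_root (negbTE (adj_irr r)).
  by have [hy e] := adj_child hxy hne; right; rewrite hy e eqxx.
case=> /andP[hx /eqP ->]; have [h _ _] := parent_spec hx; by rewrite // adjC.
Qed.

Lemma parent_edge_asym x y : parent_edge x y -> ~~ parent_edge y x.
Proof.
case/andP=> hx /eqP e; apply/negP => /andP[hy /eqP e'].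
by have := depth_parent_lt hx; have := depth_parent_lt hy; rewrite -e -e'; lra.
Qed.

Lemma sum_adj_sym (H : T -> T -> R) : (forall x y, H x y = H y x) ->
  \sum_x \sum_(y | adj x y) H x y = 2 * \sum_(x | x != r) H x (parent x).
Proof.
move=> HC; have sum_parent_edge : forall F : T -> T -> R,
    \sum_x \sum_(y | parent_edge x y) F x y = \sum_(x | x != r) F x (parent x).
  move=> F; rewrite [RHS]big_mkcond; apply: eq_bigr => x _; case: ifP => hx.
    by apply: big_pred1 => y; rewrite /parent_edge hx.
  by apply: big_pred0 => y; rewrite /parent_edge hx.
have split_adj x : \sum_(y | adj x y) H x y =
    \sum_(y | parent_edge x y) H x y + \sum_(y | parent_edge y x) H y x.
  rewrite big_mkcond [X in _ = X + _]big_mkcond [X in _ = _ + X]big_mkcond -big_split.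
  apply: eq_bigr => y _.
  rewrite adj_parent_edge HC; have [pxy|npxy] := boolP (parent_edge x y).
    by rewrite (negbTE (parent_edge_asym pxy)) /= addr0.
  by rewrite /= add0r.
under eq_bigr do rewrite split_adj; rewrite big_split /= [X in _ + X](exchange_big_dep xpredT) //=.
by rewrite !sum_parent_edge mulr2n mulrDl mul1r.
Qed.

Lemma edges_parent : edges adj = [set [set x; parent x] | x in [set x | x != r]].
Proof.
apply/setP => e; apply/imset2P/imsetP.
  case=> a b _; rewrite inE adj_parent_edge => /orP[] /andP[h /eqP ->] ->.
    by exists a; rewrite ?inE.
  by exists b; rewrite ?inE // setUC.
case=> x; rewrite inE => hx ->; have [h _ _] := parent_spec hx.
by exists x (parent x); rewrite ?inE.
Qed.

Lemma parent_edge_inj : {in [set x | x != r] &, injective (fun x => [set x; parent x])}.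
Proof.
move=> x y; rewrite !inE => hx hy e; apply/eqP; apply: contraT => hne.
have : x \in [set y; parent y] by rewrite -e set21.
have : y \in [set x; parent x] by rewrite e set21.
rewrite !inE (negbTE hne) eq_sym (negbTE hne) /= => /eqP e1 /eqP e2.
by have := depth_parent_lt hx; have := depth_parent_lt hy; rewrite -e1 -e2; lra.
Qed.

Lemma sum_weight : \sum_x weight x = 1 + \sum_(e in edges adj) tanh (ell e / 2).
Proof.
under eq_bigr do rewrite weightE; rewrite big_split /=.
rewrite (@sum_adj_sym (fun x y => (1 + q x y)^-1 - 1)); last by move=> x y; rewrite /q ellC.
rewrite edges_parent big_imset /=; last exact: parent_edge_inj.
rewrite (bigD1 r) //= -addrA; congr (_ + _).
rewrite [RHS](eq_bigl (fun x => x != r)) => [|x]; last by rewrite inE.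
rewrite mulr_sumr -big_split /=; apply: eq_bigr => x hx.
rewrite tanh_half /q; field; rewrite lt0r_neq0 // addr_gt0 //; exact: expR_gt0.
Qed.

End Root.
End Tree.

Theorem proposition3p2 (R : realType) (T : finType) (adj : rel T)
    (ell : {set T} -> R) (d : T -> T -> R) :
  is_tree adj ->
  (forall x y, adj x y -> 0 < ell [set x; y]) ->
  (forall x y p, simple_path adj x p y -> d x y = walk_length ell x p) ->
  negative_type d /\
  (forall w : T -> R, is_weighting d w <->
     (forall x, w x = \sum_(y | adj x y) (1 + expR (- ell [set x; y]))^-1
                      - ((deg adj x)%:R - 1))) /\
  (forall w : T -> R, is_weighting d w ->
     \sum_(x : T) w x = 1 + \sum_(e in edges adj) tanh (ell e / 2)).
Proof.
move=> tree ell_gt0 d_path.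
have [_ [[/card_gt0P [r _] _] _]] := tree.
split; first exact: tree_negative_type tree ell_gt0 d_path r.
split=> w; rewrite (weightingP tree ell_gt0 d_path).
  by split=> hw x; rewrite hw (weight_degree ell_gt0).
by move=> hw; under eq_bigr do rewrite hw; apply: sum_weight tree ell_gt0 d_path r.
Qed.
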